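(* In every run of the algorithm described in the context in which at most $t$ processes crash, if the writer $p_w$ does not crash during an invocation of $\mathsf{write}()$, then this invocation terminates.
   Context: Model. There are $n$ asynchronous processes $p_1,\dots,p_n$, of which up to $t<n/2$ may crash; a process runs its algorithm correctly until it crashes, and a process that never crashes is correct. Each ordered pair of processes is linked by a reliable (no loss, corruption, duplication or creation; every message sent to a correct process is eventually received), asynchronous, not necessarily FIFO channel. $p_w$ is the single writer, invoking writes sequentially; $v_0$ is the initial value. Messages: $\textsc{write}(b,v)$ with $b\in\{0,1\}$, which stands for the two types $\textsc{write0}(v)$ and $\textsc{write1}(v)$; $\textsc{read}()$; $\textsc{proceed}()$. Variables of $p_i$. These are: $history_i$ with $history_i[0]=v_0$; $w\_sync_i[1..n]$, initially all $0$; $r\_sync_i[1..n]$, initially all $0$. $\mathsf{write}(v)$ by $p_w$: $wsn\gets w\_sync_w[w]+1$; $w\_sync_w[w]\gets wsn$; $history_w[wsn]\gets v$. Send $\textsc{write}(wsn\bmod 2,v)$ to each $p_j$ with $w\_sync_w[j]=wsn-1$. Wait until at least $n-t$ indices $j$ have $w\_sync_w[j]=wsn$. Return. $\mathsf{read}()$ by $p_i$: $r\_sync_i[i]\gets r\_sync_i[i]+1$ and call the new value $rsn$. Send $\textsc{read}()$ to all $p_j$ with $j\ne i$. Wait until at least $n-t$ indices $j$ have $r\_sync_i[j]=rsn$. Let $sn\gets w\_sync_i[i]$. Wait until at least $n-t$ indices $j$ have $w\_sync_i[j]\ge sn$. Return $history_i[sn]$. On receipt of $\textsc{write}(b,v)$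 from $p_j$ at $p_i$: Wait until $b=(w\_sync_i[j]+1)\bmod 2$. Let $wsn\gets w\_sync_i[j]+1$. If $wsn=w\_sync_i[i]+1$, then set $w\_sync_i[i]\gets wsn$ and $history_i[wsn]\gets v$, and send $\textsc{write}(wsn\bmod 2,v)$ to each $p_\ell$ with $w\_sync_i[\ell]=wsn-1$. Else, if $wsn<w\_sync_i[i]$, send $\textsc{write}((wsn+1)\bmod 2,history_i[wsn+1])$ to $p_j$. Finally set $w\_sync_i[j]\gets wsn$. On receipt of $\textsc{read}()$ from $p_j$ at $p_i$: Let $sn\gets w\_sync_i[i]$; wait until $w\_sync_i[j]\ge sn$; send $\textsc{proceed}()$ to $p_j$. On receipt of $\textsc{proceed}()$ from $p_j$ at $p_i$: $r\_sync_i[j]\gets r\_sync_i[j]+1$. Message handlers run concurrently; a waiting handler does not block the reception of other messages. *)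

From Stdlib Require Lists.List.
From mathcomp Require Import all_boot.

Section Model.
Variables (n t : nat) (V : Type) (v0 : V) (w : 'I_n).

(* Messages: WRITE(b,v) with b in {0,1} (encoded as a nat b = wsn %% 2),
   READ(), PROCEED(). *)
Inductive Msg := MWrite of nat & V | MRead | MProceed.

Record Packet := Pkt { pid : nat; psrc : 'I_n; pdst : 'I_n; pmsg : Msg }.

(* A message handler suspended on a "wait until":
   TWrite j b v : handler of WRITE(b,v) received from p_j;
   TRead j sn   : handler of READ() received from p_j, with sn = w_sync_i[i]
                  computed at receipt. *)
Inductive Task := TWrite of 'I_n & nat & V | TRead of 'I_n & nat.

Inductive OpSt :=
  | OIdle
  | OWrite of nat         (* write, waiting for n-t indices with w_sync = wsn *)
  | ORead1 of nat         (* read, first wait (rsn) *)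
  | ORead2 of nat.        (* read, second wait (sn) *)

Record LState := LS {
  hist  : nat -> V;
  wsync : 'I_n -> nat;
  rsync : 'I_n -> nat;
  op    : OpSt;
  tasks : seq (nat * Task) }.

Record Config := Cfg { loc : 'I_n -> LState; net : seq Packet; ctr : nat }.

Inductive Action :=
  | ARecv of nat        (* receive the message with the given id *)
  | AFire of nat        (* resume the suspended handler with the given id *)
  | AInvWrite of V
  | AInvRead
  | AOp.                (* resume the pending operation past its wait *)

Definition is_idle (o : OpSt) : bool := if o is OIdle then true else false.

Definition updf (f : 'I_n -> nat) (j : 'I_n) (x : nat) : 'I_n -> nat :=
  fun k => if k == j then x else f k.
Definition updh (h : nat -> V) (m : nat) (x : V) : nat -> V :=
  fun k => if k == m then x else h k.

Definition set_wsync s f := LS (hist s) f (rsync s) (op s) (tasks s).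
Definition set_rsync s f := LS (hist s) (wsync s) f (op s) (tasks s).
Definition set_hist s h := LS h (wsync s) (rsync s) (op s) (tasks s).
Definition set_op s o := LS (hist s) (wsync s) (rsync s) o (tasks s).
Definition set_tasks s ts := LS (hist s) (wsync s) (rsync s) (op s) ts.

Fixpoint mkpkts (id : nat) (src : 'I_n) (m : Msg) (ds : seq 'I_n) : seq Packet :=
  match ds with
  | [::] => [::]
  | d :: ds' => Pkt id src d m :: mkpkts id.+1 src m ds'
  end.

Definition commit (c : Config) (i : 'I_n) (s : LState) (ds : seq 'I_n) (m : Msg)
  : Config :=
  Cfg (fun j => if j == i then s else loc c j)
      (net c ++ mkpkts (ctr c) i m ds) (ctr c + size ds).

Definition task_cond (s : LState) (T : Task) : bool :=
  match T with
  | TWrite j b _ => b == (wsync s j + 1) %% 2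
  | TRead j sn => sn <= wsync s j
  end.

Definition op_cond (s : LState) : bool :=
  match op s with
  | OIdle => false
  | OWrite wsn => n - t <= #|[pred j : 'I_n | wsync s j == wsn]|
  | ORead1 rsn => n - t <= #|[pred j : 'I_n | rsync s j == rsn]|
  | ORead2 sn => n - t <= #|[pred j : 'I_n | sn <= wsync s j]|
  end.

Definition task_enabled (s : LState) (id : nat) : bool :=
  has (fun p => (p.1 == id) && task_cond s p.2) (tasks s).

Definition op_enabled (s : LState) : bool := op_cond s.

(* Body of a suspended handler once its wait condition holds
   (run atomically). Returns new local state, destinations, message. *)
Definition run_task (i : 'I_n) (s : LState) (T : Task)
  : LState * seq 'I_n * Msg :=
  match T with
  | TWrite j b v =>
      let wsn := wsync s j + 1 in
      if wsn == wsync s i + 1 then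
        let s1 := set_hist (set_wsync s (updf (wsync s) i wsn)) (updh (hist s) wsn v) in
        (set_wsync s1 (updf (wsync s1) j wsn),
         [seq l <- enum 'I_n | wsync s1 l == wsn - 1], MWrite (wsn %% 2) v)
      else if wsn < wsync s i then
        (set_wsync s (updf (wsync s) j wsn),
         [:: j], MWrite ((wsn + 1) %% 2) (hist s (wsn + 1)))
      else (set_wsync s (updf (wsync s) j wsn), [::], MProceed)
  | TRead j _ => (s, [:: j], MProceed)
  end.

Definition exec (c : Config) (i : 'I_n) (a : Action) : option Config :=
  let s := loc c i in
  match a with
  | ARecv id =>
      match [seq q <- net c | pid q == id] with
      | p :: _ =>
          if pdst p == i then
            let c0 := Cfg (loc c) [seq q <- net c | pid q != id] (ctr c) in
            match pmsg p with
            | MWrite b v =>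
                Some (Cfg (fun j => if j == i then
                              set_tasks s ((ctr c, TWrite (psrc p) b v) :: tasks s)
                            else loc c j) (net c0) (ctr c).+1)
            | MRead =>
                Some (Cfg (fun j => if j == i then
                              set_tasks s ((ctr c, TRead (psrc p) (wsync s i)) :: tasks s)
                            else loc c j) (net c0) (ctr c).+1)
            | MProceed =>
                Some (commit c0 i (set_rsync s (updf (rsync s) (psrc p)
                                                 (rsync s (psrc p)).+1)) [::] MProceed)
            end
          else None
      | [::] => None
      end
  | AFire id =>
      match [seq p <- tasks s | p.1 == id] with
      | p :: _ =>
          if task_cond s p.2 then
            let s' := set_tasks s [seq q <- tasks s | q.1 != id] in
            let: (s2, ds, m) := run_task i s' p.2 in
            Some (commit c i s2 ds m)
          else None
      | [::] => None
      end
  | AInvWrite v =>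
      if (i == w) && is_idle (op s) then
        let wsn := wsync s w + 1 in
        let s1 := set_op (set_hist (set_wsync s (updf (wsync s) w wsn))
                                   (updh (hist s) wsn v)) (OWrite wsn) in
        Some (commit c i s1 [seq j <- enum 'I_n | wsync s1 j == wsn - 1]
                     (MWrite (wsn %% 2) v))
      else None
  | AInvRead =>
      if is_idle (op s) then
        let rsn := rsync s i + 1 in
        let s1 := set_op (set_rsync s (updf (rsync s) i rsn)) (ORead1 rsn) in
        Some (commit c i s1 [seq j <- enum 'I_n | j != i] MRead)
      else None
  | AOp =>
      if op_cond s then
        match op s with
        | OIdle => None
        | OWrite _ => Some (commit c i (set_op s OIdle) [::] MProceed)
        | ORead1 _ => Some (commit c i (set_op s (ORead2 (wsync s i))) [::] MProceed)
        | ORead2 _ => (* returns hist s sn *)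
            Some (commit c i (set_op s OIdle) [::] MProceed)
        end
      else None
  end.

Definition init_state : LState :=
  LS (fun _ => v0) (fun _ => 0) (fun _ => 0) OIdle [::].

Definition init_config : Config := Cfg (fun _ => init_state) [::] 0.

(* crash i = Some tc : p_i crashes at time tc (takes no step at times >= tc);
   crash i = None : p_i is correct. *)
Definition alive (crash : 'I_n -> option nat) (i : 'I_n) (k : nat) : bool :=
  if crash i is Some tc then k < tc else true.

Definition correct (crash : 'I_n -> option nat) (i : 'I_n) : Prop := crash i = None.

(* An (infinite, fair) run: c k is the configuration at time k, a k the
   step taken between times k and k+1 (None = no process steps). *)
Record run (c : nat -> Config) (a : nat -> option ('I_n * Action))
    (crash : 'I_n -> option nat) : Prop := {
  run_init : c 0 = init_config;
  run_step : forall k, match a k with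
                       | None => c k.+1 = c k
                       | Some (i, act) => alive crash i k /\ exec (c k) i act = Some (c k.+1)
                       end;
  run_msg_fair : forall k p, Stdlib.Lists.List.In p (net (c k)) -> correct crash (pdst p) ->
                   exists k', k <= k' /\ ~ Stdlib.Lists.List.In p (net (c k'));
  run_task_fair : forall k i id, correct crash i ->
                   ~ (forall k', k <= k' -> task_enabled (loc (c k') i) id);
  run_op_fair : forall k i, correct crash i ->
                   ~ (forall k', k <= k' -> op_enabled (loc (c k') i))
}.

End Model.

Arguments ARecv {V}. Arguments AFire {V}. Arguments AInvRead {V}. Arguments AOp {V}. Arguments AInvWrite {V}.
Arguments op {n V}. Arguments loc {n V}. Arguments net {n V}.
Arguments alive {n}. Arguments correct {n}. Arguments run n t {V} v0 w.

(* Call w_sync_i[j] the view of p_i on p_j.  In every run, the WRITE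
   messages from p_s to p_d that p_d has not processed yet (in transit, or
   held by a waiting handler of p_d) carry, counted by their bit, exactly the
   parities of the sequence numbers in the window
   (w_sync_d[s], min(w_sync_s[s], w_sync_s[d] + 1)].
   If the view of a correct p_d on p_s stops growing, this window is empty:
   its first message would eventually be received, and its handler would then
   stay enabled forever.  While a write is pending, the writer's sequence
   number W is fixed, and for a correct p_j the views w_sync_w[j], w_sync_j[w]
   and w_sync_j[j] are nondecreasing and bounded by W, hence eventually
   constant; both windows between p_w and p_j being empty then forces
   w_sync_w[j] = W.  So eventually n - t indices satisfy the writer's wait
   condition for good, which fairness forbids while the write is pending. *)

From Stdlib Require Import Classical_Prop.
From mathcomp Require Import all_boot zify.

Set Implicit Arguments.
Unset Strict Implicit.
Unset Printing Implicit Defensive.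

Arguments run_init {n t V v0 w c a crash}.
Arguments run_step {n t V v0 w c a crash}.
Arguments run_msg_fair {n t V v0 w c a crash}.
Arguments run_task_fair {n t V v0 w c a crash}.
Arguments run_op_fair {n t V v0 w c a crash}.

Section SeqFacts.
Variable T : Type.
Implicit Types (P a : pred T) (l : seq T).

Lemma In_filter P l y : List.In y l -> P y -> List.In y (filter P l).
Proof.
elim: l => //= z l IH [<-|Hy] Py; first by rewrite Py; left.
by case: (P z); [right|]; apply: IH.
Qed.

Lemma hasP_In P l : reflect (exists2 y, List.In y l & P y) (has P l).
Proof.
elim: l => [|z l IH] /=; first by right; case.
case Pz: (P z); first by left; exists z => //; left.
apply: (iffP IH) => [[y Hy Py]|[y [<-|Hy] Py]]; [by exists y; first right | by rewrite Pz in Py|].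
by exists y.
Qed.

Lemma count_filterC P a l : count P l = count P (filter a l) + count P (filter (predC a) l).
Proof. by elim: l => //= z l ->; case: (a z) => /=; lia. Qed.

Variables (U : eqType) (f : T -> U).

Lemma key_filter_single y l p r :
  uniq (map f l) -> [seq q <- l | f q == y] = p :: r -> r = [::].
Proof.
move=> Hu Hf; have : count (pred1 y) (map f l) <= 1 by rewrite count_uniq_mem ?leq_b1.
by rewrite count_map -size_filter Hf; case: r {Hf}.
Qed.

Lemma count_filter_key P y l p r :
  uniq (map f l) -> [seq q <- l | f q == y] = p :: r ->
  count P l = P p + count P [seq q <- l | f q != y].
Proof.
move=> Hu Hf; have Er := key_filter_single Hu Hf; subst r.
by rewrite (count_filterC P (fun q => f q == y)) Hf /= addn0.
Qed.

End SeqFacts.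

Lemma count_mem_enum_filter (T : finType) (P : pred T) x :
  count_mem x [seq y <- enum T | P y] = P x.
Proof.
rewrite count_uniq_mem; last by rewrite filter_uniq ?enum_uniq.
by rewrite mem_filter mem_enum andbT.
Qed.

Lemma subset_predC_card (T : finType) (A B : pred T) m :
  #|A| <= m -> [predC A] \subset B -> #|T| - m <= #|B|.
Proof.
move=> HA /subset_leq_card; apply: leq_trans.
by rewrite leq_subLR -(cardC A) leq_add2r.
Qed.

Lemma correct_of_alive n (crash : 'I_n -> option nat) i k :
  (forall k', k < k' -> alive crash i k') -> correct crash i.
Proof.
rewrite /correct /alive; case: (crash i) => [tc|//] /(_ (k + tc).+1).
by rewrite ltnS leq_addr => /(_ isT); lia.
Qed.

Lemma first_exit (P : nat -> Prop) k k' :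
  k <= k' -> P k -> ~ P k' -> exists2 k2, k <= k2 < k' & P k2 /\ ~ P k2.+1.
Proof.
elim: k' => [|k' IH] Hk Pk NPk'; first by move: Hk; rewrite leqn0 => /eqP E; subst.
case: (eqVneq k k'.+1) => [E|Hne]; first by subst.
have Hk' : k <= k' by lia.
case: (classic (P k')) => HP; first by exists k' => //; lia.
by have [k2 ? ?] := IH Hk' Pk HP; exists k2 => //; lia.
Qed.

Lemma bounded_nondecreasing_stable (f : nat -> nat) (K0 B : nat) :
  (forall k k', K0 <= k <= k' -> f k <= f k') -> (forall k, K0 <= k -> f k <= B) ->
  exists2 K, K0 <= K & forall k, K <= k -> f k = f K.
Proof.
move=> mono bnd; have [gap] := ubnP (B - f K0).
elim: gap K0 mono bnd => // gap IH K0 mono bnd lt_gap.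
case: (classic (exists2 k, K0 <= k & f K0 < f k)) => [[k1 Hk1 lt1]|Hno].
  suff [K ? ?] : exists2 K, k1 <= K & forall k, K <= k -> f k = f K by exists K => //; lia.
  apply: IH => [k k' /andP [? ?]|k ?|]; first by apply: mono; rewrite (leq_trans Hk1).
    by apply: bnd; lia.
  by have := bnd k1 Hk1; lia.
exists K0 => // k Hk; have := mono K0 k; rewrite leqnn Hk => /(_ isT).
have : ~ f K0 < f k by move=> ?; apply: Hno; exists k.
lia.
Qed.

Lemma eventually_forall (T : finType) (P : T -> nat -> Prop) :
  (forall x, exists K, forall k, K <= k -> P x k) ->
  exists K, forall k, K <= k -> forall x, P x k.
Proof.
move=> HP; suff [K HK] : exists K, forall k, K <= k -> forall x, x \in enum T -> P x k.
  by exists K => k Hk x; apply: HK; rewrite ?mem_enum.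
elim: (enum T) => [|x s [K HK]]; first by exists 0.
have [Kx HKx] := HP x; exists (maxn K Kx) => k Hk y.
by rewrite in_cons => /orP [/eqP ->|Hy]; [apply: HKx | apply: HK] => //; lia.
Qed.

Definition parity_count (l h x : nat) : nat :=
  count (fun m => m %% 2 == x) (iota l.+1 (h - l)).

Lemma parity_countnn l x : parity_count l l x = 0.
Proof. by rewrite /parity_count subnn. Qed.

Lemma parity_countSr l h x :
  l <= h -> parity_count l h.+1 x = parity_count l h x + (h.+1 %% 2 == x).
Proof.
move=> lh; rewrite /parity_count (_ : h.+1 - l = (h - l) + 1); last by lia.
by rewrite iotaD count_cat /= addSn subnKC // addn0.
Qed.

Lemma parity_countSl l h x :
  l < h -> parity_count l h x = (l.+1 %% 2 == x) + parity_count l.+1 h x.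
Proof. by move=> lh; rewrite /parity_count (_ : h - l = (h - l.+1).+1); last by lia. Qed.

Lemma parity_count_gt0 l h x : 0 < parity_count l h x -> l < h.
Proof.
by rewrite /parity_count; case: (ltnP l h) => // hl; rewrite (_ : h - l = 0); last by lia.
Qed.

Section Channels.
Variables (n : nat) (w : 'I_n).
Implicit Types (M : 'I_n -> 'I_n -> nat) (It : 'I_n -> 'I_n -> nat -> nat).

(* [M i j] stands for w_sync_i[j], and [It s d x] for the number of WRITE
   messages of bit [x] from [s] to [d] not yet processed by [d].  Their window
   is (chan_lo, chan_hi]: [s] forwards a number only to the processes it knows
   to be one behind. *)
Definition chan_lo M (s d : 'I_n) := M d s.
Definition chan_hi M (s d : 'I_n) := minn (M s s) (M s d).+1.

Definition channel_ok M It s d :=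
  chan_lo M s d <= chan_hi M s d /\
  forall x, It s d x = parity_count (chan_lo M s d) (chan_hi M s d) x.

Record coherent M It : Prop := {
  view_le_own : forall i j, M i j <= M i i;
  own_le_writer : forall i, M i i <= M w w;
  coherent_channel : forall s d, channel_ok M It s d }.

Definition bump M (i j : 'I_n) : 'I_n -> 'I_n -> nat :=
  fun a b => if (a == i) && (b == j) then (M i j).+1 else M a b.

Definition adopted M i : 'I_n -> 'I_n -> nat -> nat :=
  fun s d x => [&& s == i, x == (M i i).+1 %% 2, d != i & M i d == M i i].
Definition consumed M i j : 'I_n -> 'I_n -> nat -> nat :=
  fun s d x => [&& s == j, d == i & x == (M i j).+1 %% 2].
Definition echoed M i j : 'I_n -> 'I_n -> nat -> nat :=
  fun s d x => [&& s == i, d == j, x == (M i j).+2 %% 2 & (M i j).+2 <= M i i].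

(* The effect of one step: nothing; [w] adopting [M w w + 1] in an invocation
   of write; [i] consuming the next WRITE from [j] while already ahead of it,
   and replying with the following number if it has it; [i] consuming from [j]
   a number new to it, which it adopts and forwards. *)
Inductive chan_step (write_inv : bool) M It M' It' : Prop :=
  | ChanSkip of M' =2 M & (forall s d x, It' s d x = It s d x)
  | ChanAdopt of write_inv & M' =2 bump M w w &
      (forall s d x, It' s d x = It s d x + adopted M w s d x)
  | ChanConsume i j of 0 < It j i ((M i j).+1 %% 2) & M i j != M i i &
      M' =2 bump M i j &
      (forall s d x, It' s d x + consumed M i j s d x = It s d x + echoed M i j s d x)
  | ChanRelay i j of 0 < It j i ((M i j).+1 %% 2) & M i j = M i i &
      M' =2 bump (bump M i i) i j &
      (forall s d x, It' s d x + consumed M i j s d x = It s d x + adopted M i s d x).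

Lemma bump_ge M i j a b : M a b <= bump M i j a b.
Proof. by rewrite /bump; case: andP => // [[/eqP -> /eqP ->]]. Qed.

Lemma channel_ok_eq M It M' It' s d :
  chan_lo M' s d = chan_lo M s d -> chan_hi M' s d = chan_hi M s d ->
  (forall x, It' s d x = It s d x) -> channel_ok M It s d -> channel_ok M' It' s d.
Proof. by rewrite /channel_ok => -> -> HIt [? HP]; split=> // x; rewrite HIt HP. Qed.

Lemma coherent_open_channel M It s d x :
  coherent M It -> 0 < It s d x -> s != d /\ M d s < M s s.
Proof.
move=> [_ _ /(_ s d) [_ ->]] /parity_count_gt0; rewrite /chan_lo /chan_hi.
by case: (eqVneq s d) => [->|]; lia.
Qed.

Lemma coherent_adopt M It M' It' i :
  coherent M It -> i = w \/ M i i < M w w -> M' =2 bump M i i ->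
  (forall s d x, It' s d x = It s d x + adopted M i s d x) -> coherent M' It'.
Proof.
move=> [le_own own_le chan] Hi HM HIt.
have Mii : M' i i = (M i i).+1 by rewrite HM /bump eqxx.
have Mab a b : (a, b) != (i, i) -> M' a b = M a b.
  by rewrite HM /bump xpair_eqE => /negbTE ->.
split.
- move=> a b; case: (eqVneq (a, b) (i, i)) => [[-> ->] //|ab].
  rewrite Mab //; case: (eqVneq a i) => [Ea|ai]; last by rewrite Mab ?xpair_eqE ?(negbTE ai).
  by subst a; rewrite Mii; have := le_own i b; lia.
- move=> a; have Mw : M w w <= M' w w by rewrite HM bump_ge.
  case: (eqVneq a i) => [->|ai]; last first.
    by rewrite Mab ?xpair_eqE ?(negbTE ai) //; have := own_le a; lia.
  by rewrite Mii; case: Hi => [<-|]; rewrite ?Mii //; lia.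
- move=> s d; have [lohi HP] := chan s d.
  case: (eqVneq s i) => [Es|si]; last first.
    apply: (channel_ok_eq (M := M) (It := It)) => //.
    + by rewrite /chan_lo Mab // xpair_eqE (negbTE si) andbF.
    + by rewrite /chan_hi !Mab // xpair_eqE (negbTE si).
    + by move=> x; rewrite HIt /adopted (negbTE si) addn0.
  subst s; case: (eqVneq d i) => [Ed|di].
    subst d; split; rewrite /chan_lo /chan_hi Mii; first lia.
    move=> x; rewrite HIt HP /adopted /chan_lo /chan_hi eqxx andbF addn0.
    by rewrite !(minn_idPl (leqnSn _)) !parity_countnn.
  have Mdi : M' d i = M d i by rewrite Mab // xpair_eqE (negbTE di).
  have Mid : M' i d = M i d by rewrite Mab // xpair_eqE (negbTE di) andbF.
  move: lohi HP; rewrite /channel_ok /chan_lo /chan_hi Mdi Mid Mii => lohi HP.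
  case: (eqVneq (M i d) (M i i)) => [Eq|Neq].
    rewrite Eq minnn; rewrite Eq (minn_idPl (leqnSn _)) in lohi HP.
    split=> [|x]; first lia.
    by rewrite HIt HP parity_countSr // /adopted Eq !eqxx di /= andbT eq_sym.
  have lt : M i d < M i i by have := le_own i d; lia.
  rewrite (minn_idPr lt) in lohi HP; rewrite minnSS (minn_idPr (ltnW lt)).
  by split=> // x; rewrite HIt HP /adopted (negbTE Neq) !andbF addn0.
Qed.

Lemma coherent_consume M It M' It' i j :
  coherent M It -> 0 < It j i ((M i j).+1 %% 2) -> M i j < M i i -> M' =2 bump M i j ->
  (forall s d x, It' s d x + consumed M i j s d x = It s d x + echoed M i j s d x) ->
  coherent M' It'.
Proof.
move=> coh pend lt HM HIt; have [ji _] := coherent_open_channel coh pend.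
have [le_own own_le chan] := coh.
have Mij : M' i j = (M i j).+1 by rewrite HM /bump !eqxx.
have Mab a b : (a, b) != (i, j) -> M' a b = M a b.
  by rewrite HM /bump xpair_eqE => /negbTE ->.
have Maa a : M' a a = M a a.
  by apply: Mab; apply: contra ji; rewrite xpair_eqE => /andP [/eqP <- /eqP ->].
split=> [a b|a|s d]; rewrite ?Maa //.
  case: (eqVneq (a, b) (i, j)) => [[-> ->]|ab]; first by rewrite Mij.
  by rewrite Mab.
have [lohi HP] := chan s d.
have Mji : M' j i = M j i by apply: Mab; apply: contra ji; rewrite xpair_eqE => /andP [/eqP -> _].
case: (eqVneq (s, d) (j, i)) => [[Es Ed]|sd_ji]; first subst s d.
  have lt_hi : M i j < chan_hi M j i by move: pend; rewrite HP => /parity_count_gt0.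
  rewrite /channel_ok /chan_lo /chan_hi Mij Maa Mji -/(chan_hi M j i).
  split=> // x; have := HIt j i x; rewrite HP (parity_countSl _ lt_hi).
  by rewrite /consumed /echoed !eqxx (negbTE ji) /= (eq_sym x); lia.
case: (eqVneq (s, d) (i, j)) => [[Es Ed]|sd_ij]; first subst s d.
  move: lohi HP; rewrite /channel_ok /chan_lo /chan_hi Mij Maa Mji (minn_idPr lt) => lohi HP.
  have Hc x : consumed M i j i j x = 0 by rewrite /consumed (negbTE ji) andbF.
  case: (leqP (M i j).+2 (M i i)) => [le2|gt2].
    split=> [|x]; first lia; have := HIt i j x.
    by rewrite Hc HP (parity_countSr _ lohi) /echoed !eqxx le2 /= andbT (eq_sym x); lia.
  rewrite (_ : M i i = (M i j).+1); last by lia.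
  split=> // x; have := HIt i j x.
  by rewrite Hc HP /echoed (leqNgt _ (M i i)) gt2 /= !andbF; lia.
apply: channel_ok_eq (chan s d) => [||x].
- by rewrite /chan_lo Mab //; apply: contra sd_ji; rewrite !xpair_eqE andbC.
- by rewrite /chan_hi Maa Mab.
- have := HIt s d x; rewrite /consumed /echoed andbA -xpair_eqE (negbTE sd_ji).
  by rewrite andbA -xpair_eqE (negbTE sd_ij) /=; lia.
Qed.

Lemma chan_step_coherent b M It M' It' :
  coherent M It -> chan_step b M It M' It' -> coherent M' It'.
Proof.
move=> coh; case=> [HM HIt|_ HM HIt|i j pend neq HM HIt|i j pend eq HM HIt].
- have [le_own own_le chan] := coh.
  split=> [a b'|a|s d]; rewrite ?HM //.
  by apply: channel_ok_eq (chan s d); rewrite /chan_lo /chan_hi ?HM.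
- exact: coherent_adopt coh (or_introl erefl) HM HIt.
- apply: (coherent_consume coh pend _ HM HIt).
  by rewrite ltn_neqAle neq (view_le_own coh).
- have [ji lt_jj] := coherent_open_channel coh pend.
  pose It1 s d x := It s d x + adopted M i s d x.
  have coh1 : coherent (bump M i i) It1.
    apply: (@coherent_adopt M It (bump M i i) It1 i coh _ (fun _ _ => erefl) (fun _ _ _ => erefl)).
    by right; rewrite -eq; apply: leq_trans lt_jj (own_le_writer coh j).
  have M1ij : bump M i i i j = M i j by rewrite /bump (negbTE ji) andbF.
  apply: (coherent_consume coh1 _ _ HM); rewrite ?M1ij.
  + by apply: leq_trans pend (leq_addr _ _).
  + by rewrite /bump !eqxx eq.
  + move=> s d x; rewrite /It1 -HIt /consumed /echoed M1ij /bump !eqxx -eq ltnn.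
    by rewrite !andbF addn0.
Qed.

Lemma chan_step_mono b M It M' It' a a' :
  chan_step b M It M' It' -> M a a' <= M' a a'.
Proof.
by case=> [HM _|_ HM _|i j _ _ HM _|i j _ _ HM _];
  rewrite HM ?bump_ge //; apply: leq_trans (bump_ge _ _ _ _ _) (bump_ge _ _ _ _ _).
Qed.

Lemma chan_step_writer_view M It M' It' :
  coherent M It -> chan_step false M It M' It' -> M' w w = M w w.
Proof.
move=> coh; case=> [HM _|//|i j pend _ HM _|i j pend eq HM _]; rewrite HM //;
  have [ji lt_jj] := coherent_open_channel coh pend.
  by rewrite /bump; case: (eqVneq w i) => [Ew|] //=; subst i; rewrite eq_sym (negbTE ji).
have wi : w != i.
  by apply: contraTneq lt_jj => Ew; subst i; rewrite -leqNgt eq (own_le_writer coh).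
by rewrite /bump (negbTE wi).
Qed.
End Channels.

Section Protocol.
Variables (n t : nat) (V : Type) (w : 'I_n).
Local Notation config := (Config n V).
Local Notation step := (exec n t V w).

Definition view (c : config) (i j : 'I_n) := wsync n V (loc c i) j.

Definition write_bit (m : Msg V) x := if m is MWrite b _ then b == x else false.
Definition is_write_pkt s d x (p : Packet n V) :=
  [&& psrc n V p == s, pdst n V p == d & write_bit (pmsg n V p) x].
Definition is_write_task s x (e : nat * Task n V) :=
  if e.2 is TWrite j b _ then (j == s) && (b == x) else false.
Definition pending (c : config) s d x :=
  count (is_write_pkt s d x) (net c) + count (is_write_task s x) (tasks n V (loc c d)).

Lemma is_write_taskE s x id j b v :
  is_write_task s x (id, TWrite n V j b v) = (j == s) && (b == x).
Proof. by []. Qed.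

Record wf (c : config) : Prop := {
  wf_net_uniq : uniq (map (pid n V) (net c));
  wf_net_fresh : all (fun p => pid n V p < ctr n V c) (net c);
  wf_tasks_uniq : forall i, uniq (map fst (tasks n V (loc c i)));
  wf_tasks_fresh : forall i, all (fun e => e.1 < ctr n V c) (tasks n V (loc c i)) }.

Lemma map_pid_mkpkts id i m ds : map (pid n V) (mkpkts n V id i m ds) = iota id (size ds).
Proof. by elim: ds id => //= d ds IH id; rewrite IH. Qed.

Lemma wf_commit c i s ds m :
  wf c -> uniq (map fst (tasks n V s)) -> all (fun e => e.1 < ctr n V c) (tasks n V s) ->
  wf (commit n V c i s ds m).
Proof.
move=> [nu nf tu tf] su sf.
split=> [||j|j] /=.
- rewrite map_cat cat_uniq nu map_pid_mkpkts iota_uniq andbT /=.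
  apply/hasPn => id; rewrite mem_iota => /andP [le_id _]; apply/negP => Hin.
  have : all (fun k => k < ctr n V c) (map (pid n V) (net c)) by rewrite all_map.
  by move=> /allP /(_ id Hin); rewrite ltnNge le_id.
- rewrite all_cat (sub_all _ nf) /=; last by move=> p /=; lia.
  have : all (fun k => k < ctr n V c + size ds) (map (pid n V) (mkpkts n V (ctr n V c) i m ds)).
    by rewrite map_pid_mkpkts; apply/allP => id; rewrite mem_iota; lia.
  by rewrite all_map.
- by case: ifP.
- by case: ifP => _; [move: sf | move: (tf j)]; apply: sub_all => e /=; lia.
Qed.

Lemma wf_commit_tasks c i s ds m :
  wf c -> tasks n V s = tasks n V (loc c i) -> wf (commit n V c i s ds m).
Proof. by move=> H Hs; apply: wf_commit; rewrite // Hs; case: H. Qed.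

Lemma wf_drop_pkt c id :
  wf c -> wf (Cfg n V (loc c) [seq q <- net c | pid n V q != id] (ctr n V c)).
Proof.
move=> [nu nf tu tf]; split=> //=.
- by move: (filter_uniq (predC1 id) nu); rewrite filter_map.
- by rewrite all_filter; apply: sub_all nf => p /= ->; rewrite implybT.
Qed.

Lemma wf_add_task c i T :
  wf c -> wf (Cfg n V (fun j => if j == i then
                      set_tasks n V (loc c i) ((ctr n V c, T) :: tasks n V (loc c i))
                    else loc c j) (net c) (ctr n V c).+1).
Proof.
move=> [nu nf tu tf]; split=> [||j|j] /=.
- exact: nu.
- by apply: sub_all nf => p /= /ltnW.
- case: ifP => _ //=; rewrite tu andbT; apply/negP => Hin.
  have : all (fun k => k < ctr n V c) (map fst (tasks n V (loc c i))) by rewrite all_map.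
  by move=> /allP /(_ _ Hin); rewrite ltnn.
- by case: ifP => _ //=; rewrite ?ltnSn //=; apply: sub_all (tf _) => e /= /ltnW.
Qed.

Lemma run_task_tasks i s T : tasks n V (run_task n V i s T).1.1 = tasks n V s.
Proof. by case: T => [j b v|j sn] //=; case: ifP => _ //; case: ifP. Qed.

Lemma exec_wf c i act c' : wf c -> step c i act = Some c' -> wf c'.
Proof.
move=> H; case: act => [id|id|v||]; rewrite /exec.
- case: [seq q <- net c | pid n V q == id] => [|p r] //; case: ifP => // _.
  have H0 := wf_drop_pkt id H.
  case: (pmsg n V p) => [b v| |] [<-]; [exact: (wf_add_task i _ H0)..|].
  exact: wf_commit_tasks.
- case Hf: [seq p <- tasks n V (loc c i) | p.1 == id] => [|e r] //; case: ifP => // _.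
  case E: run_task => [[s2 ds] m] [<-]; apply: wf_commit => //;
    rewrite -[s2]/(s2, ds, m).1.1 -E run_task_tasks /=.
  + by move: (filter_uniq (predC1 id) (wf_tasks_uniq H i)); rewrite filter_map.
  + by rewrite all_filter; apply: sub_all (wf_tasks_fresh H i) => q /= ->; rewrite implybT.
- by case: ifP => // _ [<-]; exact: wf_commit_tasks.
- by case: ifP => // _ [<-]; exact: wf_commit_tasks.
- by case: ifP => // _; case: (op (loc c i)) => // [x|x|x] [<-]; exact: wf_commit_tasks.
Qed.

Lemma view_commit c i s ds m a b :
  view (commit n V c i s ds m) a b = if a == i then wsync n V s b else view c a b.
Proof. by rewrite /view /=; case: ifP. Qed.

Lemma count_write_mkpkts s d x id i m ds :
  count (is_write_pkt s d x) (mkpkts n V id i m ds) = ((i == s) && write_bit m x) * count_mem d ds.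
Proof.
elim: ds id => [|e ds IH] id /=; first by rewrite muln0.
by rewrite IH mulnDr /is_write_pkt /= mulnb andbA andbAC.
Qed.

Lemma pending_commit_tasks c i s ds m s' d x :
  tasks n V s = tasks n V (loc c i) ->
  pending (commit n V c i s ds m) s' d x =
  pending c s' d x + ((i == s') && write_bit m x) * count_mem d ds.
Proof.
move=> Hs; rewrite /pending /= count_cat count_write_mkpkts.
by case: ifP => [/eqP ->|_]; rewrite ?Hs addnAC.
Qed.

Lemma pending_fire c i id e r s ds m s' d x :
  wf c -> [seq q <- tasks n V (loc c i) | q.1 == id] = e :: r ->
  tasks n V s = [seq q <- tasks n V (loc c i) | q.1 != id] ->
  pending (commit n V c i s ds m) s' d x + (d == i) * is_write_task s' x e =
  pending c s' d x + ((i == s') && write_bit m x) * count_mem d ds.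
Proof.
move=> H Hf Hs; rewrite /pending /= count_cat count_write_mkpkts.
move: (_ * count_mem d ds) => sent; case: (eqVneq d i) => [->|_]; last by rewrite mul0n; lia.
by rewrite (count_filter_key _ (wf_tasks_uniq H i) Hf) -Hs mul1n; lia.
Qed.

Lemma consumedE (M : 'I_n -> 'I_n -> nat) i j s d x b :
  b = (M i j).+1 %% 2 -> (d == i) * ((j == s) && (b == x)) = consumed M i j s d x.
Proof. by move->; rewrite /consumed mulnb (eq_sym j) (eq_sym _ x) andbCA. Qed.

Lemma adoptedE (M : 'I_n -> 'I_n -> nat) i s d x :
  ((i == s) && ((M i i).+1 %% 2 == x)) * (updf n (M i) i (M i i).+1 d == M i i) =
  adopted M i s d x.
Proof.
rewrite /adopted /updf mulnb; case: (eqVneq d i) => [->|di] /=.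
  by rewrite (_ : (M i i).+1 == M i i = false) ?andbF //; apply/eqP; lia.
by rewrite (eq_sym i) (eq_sym _ x) andbA.
Qed.

Lemma echoedE (M : 'I_n -> 'I_n -> nat) i j s d x :
  (M i j).+2 <= M i i ->
  ((i == s) && ((M i j).+2 %% 2 == x)) * count_mem d [:: j] = echoed M i j s d x.
Proof.
move=> le2; rewrite /echoed le2 /= addn0 mulnb andbT.
by rewrite (eq_sym i) (eq_sym _ x) (eq_sym j) andbAC andbA.
Qed.

Lemma chan_step_recv c i id c' :
  wf c -> step c i (ARecv id) = Some c' ->
  chan_step w false (view c) (pending c) (view c') (pending c').
Proof.
move=> H; rewrite /exec; case Hf: [seq q <- net c | pid n V q == id] => [|p r] //.
case: ifP => // /eqP dst.
have Hnet s d x := count_filter_key (is_write_pkt s d x) (wf_net_uniq H) Hf.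
case Hm: (pmsg n V p) => [b v| |] [<-]; apply: ChanSkip => [a k|s d x];
  rewrite /view /pending /= ?cats0 ?Hnet /is_write_pkt ?Hm ?dst ?andbF /=;
  try by case: ifP => // /eqP ->.
case: (eqVneq d i) => [->|di] /=; last by rewrite andbF.
by rewrite is_write_taskE; lia.
Qed.

Lemma chan_step_fire c i id c' :
  wf c -> coherent w (view c) (pending c) -> step c i (AFire id) = Some c' ->
  chan_step w false (view c) (pending c) (view c') (pending c').
Proof.
move=> H coh; rewrite /exec; case Hf: [seq p <- tasks n V (loc c i) | p.1 == id] => [|e r] //.
case: ifP => // cond.
have Hpf := pending_fire _ _ _ _ _ H Hf.
case: e Hf cond Hpf => id0 [j b v|j sn] Hf cond Hpf; rewrite /= in cond Hpf; last first.
  move=> [<-]; apply: ChanSkip => [a k|s d x].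
    by rewrite view_commit; case: ifP => // /eqP ->.
  have := Hpf (set_tasks n V (loc c i) _) [:: j] (MProceed V) s d x erefl.
  by rewrite muln0 /= andbF !addn0.
have Eb : b = (view c i j).+1 %% 2 by rewrite (eqP cond) addn1.
have pend : 0 < pending c j i ((view c i j).+1 %% 2).
  rewrite /pending (count_filter_key _ (wf_tasks_uniq H i) Hf) -Eb.
  by rewrite is_write_taskE !eqxx; lia.
have [ji _] := coherent_open_channel coh pend.
case Er: (run_task n V i _ _) => [[s2 ds] m] [<-].
have Ht : tasks n V s2 = [seq q <- tasks n V (loc c i) | q.1 != id].
  by rewrite -[s2]/(s2, ds, m).1.1 -Er run_task_tasks.
have Hp s d x := Hpf s2 ds m s d x Ht; have Hv a k := view_commit c i s2 ds m a k.
move: Er; rewrite /run_task /= -/(view c i j) -/(view c i i) !addn1 subn1.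
case: ifP => [/eqP [eqL] [Es Ed Em]|neL]; first subst s2 ds m.
  apply: (ChanRelay _ _ pend eqL) => [a k|s d x].
    by rewrite Hv /bump /updf; case: (eqVneq a i) => [->|] //=; rewrite eqxx (negbTE ji) eqL.
  have := Hp s d x; rewrite is_write_taskE count_mem_enum_filter (consumedE _ _ _ Eb).
  by rewrite eqL adoptedE.
have neq : view c i j != view c i i by rewrite -eqSS neL.
case: ifP => [lt2|ge2] [Es Ed Em]; subst s2 ds m;
  apply: (ChanConsume _ _ pend neq) => [a k|s d x];
  try by rewrite Hv /bump /updf; case: (eqVneq a i) => [->|] //=.
- by have := Hp s d x; rewrite is_write_taskE (consumedE _ _ _ Eb) echoedE.
- have := Hp s d x; rewrite is_write_taskE (consumedE _ _ _ Eb) /= andbF mul0n addn0 => ->.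
  by rewrite /echoed ge2 !andbF addn0.
Qed.

Lemma chan_step_silent b c i s ds m :
  wsync n V s = wsync n V (loc c i) -> tasks n V s = tasks n V (loc c i) ->
  (forall x, write_bit m x = false) ->
  let c' := commit n V c i s ds m in
  chan_step w b (view c) (pending c) (view c') (pending c').
Proof.
move=> Hw Ht Hm; apply: ChanSkip => [a k|s' d x].
  by rewrite view_commit; case: ifP => // /eqP ->; rewrite Hw.
by rewrite pending_commit_tasks // Hm andbF addn0.
Qed.

Definition invokes_write (act : Action V) : bool := if act is AInvWrite _ then true else false.

Lemma exec_chan_step c i act c' :
  wf c -> coherent w (view c) (pending c) -> step c i act = Some c' ->
  chan_step w (invokes_write act) (view c) (pending c) (view c') (pending c').
Proof.
move=> H coh; case: act => [id|id|v||] /=; [exact: chan_step_recv | exact: chan_step_fire | | |];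
  rewrite /exec.
- case: ifP => // /andP [/eqP -> _] [<-].
  apply: ChanAdopt => // [a k|s d x].
    by rewrite view_commit /bump /updf; case: (eqVneq a w) => [->|] //=; rewrite addn1.
  rewrite pending_commit_tasks // count_mem_enum_filter addn1 /= subn1.
  by rewrite -[wsync n V (loc c w)]/(view c w) adoptedE.
- by case: ifP => // _ [<-]; apply: chan_step_silent.
- case: ifP => // _.
  by case: (op (loc c i)) => // [x|x|x] [<-]; apply: chan_step_silent.
Qed.

Lemma exec_frame c i act c' a : step c i act = Some c' -> a != i -> loc c' a = loc c a.
Proof.
move=> + /negbTE ai; case: act => [id|id|v||]; rewrite /exec.
- case: [seq q <- net c | pid n V q == id] => [|p r] //; case: ifP => // _.
  by case: (pmsg n V p) => [b v| |] [<-] /=; rewrite ai.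
- case: [seq p <- tasks n V (loc c i) | p.1 == id] => [|e r] //; case: ifP => // _.
  by case: run_task => [[s2 ds] m] [<-] /=; rewrite ai.
- by case: ifP => // _ [<-] /=; rewrite ai.
- by case: ifP => // _ [<-] /=; rewrite ai.
- by case: ifP => // _; case: (op (loc c i)) => // [x|x|x] [<-] /=; rewrite ai.
Qed.

Lemma run_task_op i s T : op (run_task n V i s T).1.1 = op s.
Proof. by case: T => [j b v|j sn] //=; case: ifP => _ //; case: ifP. Qed.

Lemma exec_invokes_write c i act c' :
  step c i act = Some c' -> invokes_write act -> i = w /\ is_idle (op (loc c i)).
Proof. by case: act => // v; rewrite /exec; case: andP => // [[/eqP]]. Qed.

Lemma exec_invwrite_op c v c' :
  step c w (AInvWrite v) = Some c' -> op (loc c' w) = OWrite (view c' w w).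
Proof.
rewrite /exec eqxx /=; case: ifP => // _ [<-].
by rewrite /view /= eqxx /= /updf eqxx.
Qed.

Lemma exec_pending_op c i act c' x :
  op (loc c i) = OWrite x -> step c i act = Some c' ->
  op (loc c' i) = OWrite x \/ op (loc c' i) = OIdle.
Proof.
move=> Hop; case: act => [id|id|v||]; rewrite /exec ?Hop ?andbF //.
- case: [seq q <- net c | pid n V q == id] => [|p r] //; case: ifP => // _.
  by case: (pmsg n V p) => [b v| |] [<-] /=; rewrite eqxx /= Hop; left.
- case: [seq p <- tasks n V (loc c i) | p.1 == id] => [|e r] //; case: ifP => // _.
  case Er: (run_task n V i _ _) => [[s2 ds] m] [<-] /=; rewrite eqxx; left.
  by rewrite -[s2]/(s2, ds, m).1.1 -Er run_task_op.
- by case: ifP => // _ [<-] /=; rewrite eqxx; right.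
Qed.

Lemma run_task_write_view i s j b v :
  wsync n V (run_task n V i s (TWrite n V j b v)).1.1 j = (wsync n V s j).+1.
Proof. by rewrite /= !addn1; case: ifP => _; [|case: ifP]; rewrite /= /updf eqxx. Qed.

Lemma exec_keeps_write_task c i act c' d id0 s b v :
  wf c -> step c i act = Some c' -> view c' d s = view c d s ->
  List.In (id0, TWrite n V s b v) (tasks n V (loc c d)) ->
  List.In (id0, TWrite n V s b v) (tasks n V (loc c' d)).
Proof.
move=> H Hex; case: (eqVneq d i) => [->|di]; last by rewrite (exec_frame Hex di).
move: Hex; case: act => [id|id|v'||]; rewrite /exec.
- case: [seq q <- net c | pid n V q == id] => [|p r] //; case: ifP => // _.
  by case: (pmsg n V p) => [b' v'| |] [<-] _ /=; rewrite eqxx //=; right.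
- case Hf: [seq p <- tasks n V (loc c i) | p.1 == id] => [|e r] //; case: ifP => // _.
  case Er: (run_task n V i _ _) => [[s2 ds] m] [<-] Hv Hin.
  have Ht : tasks n V s2 = [seq q <- tasks n V (loc c i) | q.1 != id].
    by rewrite -[s2]/(s2, ds, m).1.1 -Er run_task_tasks.
  rewrite /= eqxx Ht; case: (eqVneq id0 id) => [E|ne]; last exact: In_filter.
  have : List.In (id0, TWrite n V s b v) [:: e].
    by rewrite -(key_filter_single (wf_tasks_uniq H i) Hf) -Hf; apply: In_filter => //=; rewrite E.
  case=> // Ee; subst e; move: Hv; rewrite view_commit eqxx -[s2]/(s2, ds, m).1.1 -Er.
  by rewrite run_task_write_view /view /=; lia.
- by case: ifP => // _ [<-] _ /=; rewrite eqxx.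
- by case: ifP => // _ [<-] _ /=; rewrite eqxx.
- by case: ifP => // _; case: (op (loc c i)) => // [x|x|x] [<-] _ /=; rewrite eqxx.
Qed.

Lemma exec_delivers_write c i act c' p s d x :
  wf c -> step c i act = Some c' -> List.In p (net c) -> ~ List.In p (net c') ->
  is_write_pkt s d x p -> exists id0 v, List.In (id0, TWrite n V s x v) (tasks n V (loc c' d)).
Proof.
move=> H Hex Hin Hout Hw; move: Hex; case: act => [id|id|v||]; rewrite /exec;
  try by (case: ifP => // _; try case: (op (loc c i)) => // [y|y|y]); move=> [Ec'];
         case: Hout; rewrite -Ec'; apply: List.in_or_app; left.
- case Hf: [seq q <- net c | pid n V q == id] => [|q r] //; case: ifP => // /eqP dst.
  case: (eqVneq (pid n V p) id) => [Ep|ne]; last first.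
    by move=> Hc'; case: Hout; move: Hc'; case: (pmsg n V q) => [b v| |] [<-] /=;
      rewrite ?cats0; apply: In_filter.
  have : List.In p [:: q].
    by rewrite -(key_filter_single (wf_net_uniq H) Hf) -Hf; apply: In_filter; rewrite //= Ep.
  case=> // Eq; subst q; move: Hw; rewrite /is_write_pkt dst => /and3P [/eqP <- /eqP <-].
  by case: (pmsg n V p) => [b v| |] // /eqP <- [<-]; exists (ctr n V c), v; rewrite /= eqxx; left.
- case: [seq p <- tasks n V (loc c i) | p.1 == id] => [|e r] //; case: ifP => // _.
  case: (run_task n V i _ _) => [[s2 ds] m] [Ec'].
  by case: Hout; rewrite -Ec'; apply: List.in_or_app; left.
Qed.

Section Run.
Variables (v0 : V) (c : nat -> config) (a : nat -> option ('I_n * Action V))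
  (crash : 'I_n -> option nat).
Hypothesis Hr : run n t v0 w c a crash.

Lemma run_step_cases k : c k.+1 = c k \/ exists i act, step (c k) i act = Some (c k.+1).
Proof.
have := run_step Hr k; case: (a k) => [[i act] [_ Hex]|->]; last by left.
by right; exists i, act.
Qed.

Lemma run_invariant k : wf (c k) /\ coherent w (view (c k)) (pending (c k)).
Proof.
elim: k => [|k [H coh]].
  rewrite (run_init Hr); split; first by split.
  by split=> // s d; split=> // x; rewrite /pending /chan_lo /chan_hi /= parity_countnn.
case: (run_step_cases k) => [-> //|[i [act Hex]]]; split; first exact: exec_wf Hex.
exact: chan_step_coherent coh (exec_chan_step H coh Hex).
Qed.

Lemma run_view_mono k k' i j : k <= k' -> view (c k) i j <= view (c k') i j.
Proof.
elim: k' => [|k' IH]; first by rewrite leqn0 => /eqP ->.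
rewrite leq_eqVlt => /orP [/eqP -> //|/IH le]; apply: leq_trans le _.
case: (run_step_cases k') => [-> //|[i' [act Hex]]]; have [H coh] := run_invariant k'.
exact: chan_step_mono (exec_chan_step H coh Hex).
Qed.

Lemma write_task_persists d s B K K1 id0 b v :
  (forall k, K <= k -> view (c k) d s = B) -> K <= K1 ->
  List.In (id0, TWrite n V s b v) (tasks n V (loc (c K1) d)) ->
  forall k, K1 <= k -> List.In (id0, TWrite n V s b v) (tasks n V (loc (c k) d)).
Proof.
move=> HB HK1 Hin; elim=> [|k IH]; first by rewrite leqn0 => /eqP <-.
rewrite leq_eqVlt => /orP [/eqP <- //|lt]; have Hk := IH lt.
case: (run_step_cases k) => [-> //|[i [act Hex]]].
by apply: exec_keeps_write_task (proj1 (run_invariant k)) Hex _ Hk; rewrite !HB //; lia.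
Qed.

Lemma stable_view_no_pending d s B K :
  correct crash d -> (forall k, K <= k -> view (c k) d s = B) ->
  pending (c K) s d (B.+1 %% 2) = 0.
Proof.
move=> Hd HB.
have no_task K1 id0 v : K <= K1 ->
    ~ List.In (id0, TWrite n V s (B.+1 %% 2) v) (tasks n V (loc (c K1) d)).
  move=> HK1 Hin; apply: (run_task_fair Hr K1 d id0 Hd) => k Hk.
  apply/hasP_In; exists (id0, TWrite n V s (B.+1 %% 2) v).
    exact: write_task_persists HB HK1 Hin k Hk.
  by rewrite /= eqxx /= -/(view (c k) d s) HB ?addn1 //; lia.
have no_pkt : count (is_write_pkt s d (B.+1 %% 2)) (net (c K)) = 0.
  apply/eqP; rewrite -leqn0 leqNgt -has_count; apply/negP => /hasP_In [p Hin Hp].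
  have Hdst : correct crash (pdst n V p) by case/and3P: Hp => _ /eqP ->.
  have [k' [Kk' Hout]] := run_msg_fair Hr K p Hin Hdst.
  have [k2 /andP [le2 _] [Hin2 Hout2]] :=
    first_exit (P := fun k => List.In p (net (c k))) Kk' Hin Hout.
  case: (run_step_cases k2) => [E|[i [act Hex]]]; first by rewrite E in Hout2.
  have [id0 [v Hin3]] := exec_delivers_write (proj1 (run_invariant k2)) Hex Hin2 Hout2 Hp.
  by apply: no_task Hin3; apply: leq_trans le2 _.
have no_tsk : count (is_write_task s (B.+1 %% 2)) (tasks n V (loc (c K) d)) = 0.
  apply/eqP; rewrite -leqn0 leqNgt -has_count; apply/negP => /hasP_In [[id0 [j b v|//]] Hin].
  by case/andP => /eqP Ej /eqP Eb; subst j b; apply: no_task Hin.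
by rewrite /pending no_pkt no_tsk.
Qed.

Lemma stable_view_closes_channel s d K :
  correct crash d -> (forall k, K <= k -> view (c k) d s = view (c K) d s) ->
  chan_lo (view (c K)) s d = chan_hi (view (c K)) s d.
Proof.
move=> Hd HB; have [lohi HP] := coherent_channel (proj2 (run_invariant K)) s d.
apply/eqP; rewrite eqn_leq lohi /= leqNgt; apply/negP => lt.
have := stable_view_no_pending Hd HB.
by rewrite HP (parity_countSl _ lt) /chan_lo eqxx.
Qed.

Lemma writer_view_converges j K0 W :
  correct crash w -> correct crash j -> (forall k, K0 <= k -> view (c k) w w = W) ->
  exists K, forall k, K <= k -> view (c k) w j = W.
Proof.
move=> Hw Hj HW.
pose f k := view (c k) w j + view (c k) j w + view (c k) j j.
have [K K0K Hf] : exists2 K, K0 <= K & forall k, K <= k -> f k = f K.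
  apply: (bounded_nondecreasing_stable (B := 3 * W)) => [k k' /andP [_ le]|k Hk].
    rewrite /f; have := run_view_mono w j le; have := run_view_mono j w le.
    by have := run_view_mono j j le; lia.
  have [le_own own_le _] := proj2 (run_invariant k).
  by rewrite /f; have := le_own w j; have := le_own j w; have := own_le j; rewrite HW //; lia.
have stable k : K <= k -> view (c k) w j = view (c K) w j /\ view (c k) j w = view (c K) j w.
  move=> Hk; have := Hf k Hk; rewrite /f.
  by have := run_view_mono w j Hk; have := run_view_mono j w Hk; have := run_view_mono j j Hk; lia.
have Ewj := stable_view_closes_channel Hj (fun k Hk => (stable k Hk).2).
have Ejw := stable_view_closes_channel Hw (fun k Hk => (stable k Hk).1).
exists K => k Hk; rewrite (stable k Hk).1.
(* [M j w = min(W, M w j + 1)] and [M w j = min(M j j, M j w + 1)] with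
   [M j w <= M j j] leave no room for [M w j < W]. *)
have [le_own _ _] := proj2 (run_invariant K).
move: Ewj Ejw (le_own w j) (le_own j w); rewrite /chan_lo /chan_hi HW //; lia.
Qed.

Lemma pending_write_persists k0 W :
  op (loc (c k0) w) = OWrite W -> view (c k0) w w = W ->
  (forall k, k0 < k -> op (loc (c k) w) <> OIdle) ->
  forall k, k0 <= k -> op (loc (c k) w) = OWrite W /\ view (c k) w w = W.
Proof.
move=> Hop0 HW0 busy; elim=> [|k IH]; first by rewrite leqn0 => /eqP <-.
rewrite leq_eqVlt => /orP [/eqP <- //|lt]; have [Hop HW] := IH lt.
case: (run_step_cases k) => [-> //|[i [act Hex]]]; have [H coh] := run_invariant k.
have nw : invokes_write act = false.
  by apply/negP => /(exec_invokes_write Hex) [Ei]; rewrite Ei Hop.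
split; last first.
  by rewrite -HW; apply: (chan_step_writer_view coh); rewrite -nw; exact: exec_chan_step H coh Hex.
case: (eqVneq i w) => [Ei|iw]; last by rewrite (exec_frame Hex _) // eq_sym.
by subst i; case: (exec_pending_op Hop Hex) => // Hidle; case: (busy k.+1 lt).
Qed.

Lemma writer_eventually_sees_correct K0 W :
  correct crash w -> (forall k, K0 <= k -> view (c k) w w = W) ->
  exists K, forall k, K <= k -> forall j, correct crash j -> view (c k) w j = W.
Proof.
move=> Hw HW; apply: eventually_forall => j.
case: (classic (correct crash j)) => Hj; last by exists 0.
by have [K HK] := writer_view_converges Hw Hj HW; exists K => k Hk _; apply: HK.
Qed.

End Run.

End Protocol.

Theorem lemma8 (n t : nat) (V : Type) (v0 : V) (w : 'I_n)
    (c : nat -> Config n V) (a : nat -> option ('I_n * Action V))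
    (crash : 'I_n -> option nat) :
  2 * t < n ->
  #|[pred i : 'I_n | crash i != None]| <= t ->
  run n t v0 w c a crash ->
  forall (k : nat) (v : V), a k = Some (w, AInvWrite v) ->
  (* the writer does not crash while this write invocation is pending *)
  (forall k', k < k' ->
     (forall k'', k < k'' <= k' -> op (loc (c k'') w) <> OIdle) ->
     alive crash w k') ->
  exists k', k < k' /\ op (loc (c k') w) = OIdle.
Proof.
move=> _ Hcrash Hr k v Ha Halive; apply: NNPP => Hno.
have busy k' : k < k' -> op (loc (c k') w) <> OIdle by move=> Hk E; apply: Hno; exists k'.
have Hw : correct crash w.
  by apply: (correct_of_alive (k := k)) => k' Hk'; apply: Halive => // k'' /andP [/busy].
have := run_step Hr k; rewrite Ha => -[_ Hex]; have Hop := exec_invwrite_op Hex.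
set W := view (c k.+1) w w in Hop.
have persist := pending_write_persists Hr Hop erefl (fun k' Hk' => busy k' (ltnW Hk')).
have [K HK] := writer_eventually_sees_correct Hr Hw (fun k' Hk' => (persist k' Hk').2).
apply: (run_op_fair Hr (maxn K k.+1) w Hw) => k' Hk'.
rewrite /op_enabled /op_cond (persist k' _).1; last by lia.
move: (subset_predC_card (B := [pred j | wsync n V (loc (c k') w) j == W]) Hcrash).
rewrite card_ord; apply; apply/subsetP => j; rewrite !inE negbK => /eqP Hj.
by apply/eqP/HK => //; lia.
Qed.
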